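(* Let $p\ge1$ and let $\bm A\in\mathbb{R}^{m\times d}$, $\bm B\in\mathbb{R}^{n\times d}$ be finite sequences of vectors with rows $\bm a_i$, $\bm b_j$. Then \[\Big\|\sum_{i=1}^m\bm a_i-\sum_{j=1}^n\bm b_j\Big\|_p\le d^p_{\mathrm{ERP}}(\bm A,\bm B).\]
   Context: The ERP distance is defined recursively: $d^p_{\mathrm{ERP}}(\bm A,\emptyset)=\sum_{i=1}^m\|\bm a_i\|_p$, $d^p_{\mathrm{ERP}}(\emptyset,\bm B)=\sum_{i=1}^n\|\bm b_i\|_p$, and otherwise $d^p_{\mathrm{ERP}}(\bm A,\bm B)=\min\{\|\bm a_1\|_p+d^p_{\mathrm{ERP}}(\bm A_{2:},\bm B),\ \|\bm b_1\|_p+d^p_{\mathrm{ERP}}(\bm A,\bm B_{2:}),\ \|\bm a_1-\bm b_1\|_p+d^p_{\mathrm{ERP}}(\bm A_{2:},\bm B_{2:})\}$, where $\emptyset$ is the empty sequence and $\bm A_{2:}$ removes the first row. *)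

From HB Require Import structures.
From mathcomp Require Import all_boot all_order all_algebra.
From mathcomp Require Import all_classical all_reals all_analysis.
Set Implicit Arguments. Unset Strict Implicit. Unset Printing Implicit Defensive.
Import Order.TTheory GRing.Theory Num.Theory.
Local Open Scope ring_scope.

Section ERP.
Variables (R : realType) (d : nat) (p : R).

Definition pnorm (x : 'rV[R]_d) : R :=
  (\sum_(j < d) `|x 0 j| `^ p) `^ p^-1.

Fixpoint erp (A : seq 'rV[R]_d) : seq 'rV[R]_d -> R :=
  match A with
  | [::] => fun B => \sum_(b <- B) pnorm b
  | a :: A' =>
      fix erpA (B : seq 'rV[R]_d) : R :=
        match B with
        | [::] => \sum_(x <- a :: A') pnorm x
        | b :: B' =>
            Num.min (pnorm a + erp A' B)
              (Num.min (pnorm b + erpA B') (pnorm (a - b) + erp A' B'))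
        end
  end.

Definition rows (m : nat) (A : 'M[R]_(m, d)) : seq 'rV[R]_d :=
  [seq row i A | i <- enum 'I_m].

End ERP.

From HB Require Import structures.
From mathcomp Require Import all_boot all_order all_algebra.
From mathcomp Require Import all_classical all_reals all_analysis.
Import Order.TTheory GRing.Theory Num.Theory.
Local Open Scope ring_scope.

(* Every branch of the ERP recursion removes a vector a, -b or a - b from the
   difference of the sums and pays at least its p-norm, so the inequality
   follows by induction along the recursion from the triangle inequality for
   the p-norm.  That triangle inequality is Minkowski's inequality for the
   counting measure on nat, applied to vectors extended by zero. *)

Section PNorm.
Variables (R : realType) (d : nat) (p : R).
Hypothesis p_ge1 : 1 <= p.

Definition zero_ext (x : 'rV[R]_d) (k : nat) : R :=
  if insub k is Some j then x 0 j else 0.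

Lemma zero_extD (x y : 'rV[R]_d) : zero_ext (x + y) = zero_ext x \+ zero_ext y.
Proof.
by apply/funext => k /=; rewrite /zero_ext; case: insubP => [j _ _|_];
  rewrite ?mxE ?addr0.
Qed.

Lemma pnorm_Lnorm_counting (x : 'rV[R]_d) :
  (pnorm p x)%:E = 'N[counting]_p%:E[EFin \o zero_ext x]%E.
Proof.
have p_gt0 : 0 < p by exact: lt_le_trans p_ge1.
rewrite Lnorm_counting // (nneseries_split 0 d) //= add0n eseries0 ?adde0.
  rewrite /pnorm -poweR_EFin -sumEFin big_mkord; congr (_ `^ _)%E.
  by apply: eq_bigr => j _; rewrite /zero_ext valK.
by move=> k; rewrite leqNgt => /negbTE dk _; rewrite /zero_ext insubF //
  normr0 powR0 ?gt_eqF.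
Qed.

Lemma minkowski (x y : 'rV[R]_d) : pnorm p (x + y) <= pnorm p x + pnorm p y.
Proof.
rewrite -lee_fin EFinD !pnorm_Lnorm_counting zero_extD.
exact: minkowski_EFin.
Qed.

Lemma ler_pnormD (x y : 'rV[R]_d) c :
  pnorm p y <= c -> pnorm p (x + y) <= pnorm p x + c.
Proof. by move=> yc; rewrite (le_trans (minkowski x y)) // lerD2l. Qed.

Lemma pnorm0 : pnorm p (0 : 'rV[R]_d) = 0.
Proof.
have p_neq0 : p != 0 by rewrite gt_eqF // (lt_le_trans _ p_ge1).
rewrite /pnorm big1 ?powR0 ?invr_neq0 // => j _.
by rewrite mxE normr0 powR0.
Qed.

Lemma pnormN (x : 'rV[R]_d) : pnorm p (- x) = pnorm p x.
Proof.
by rewrite /pnorm; congr (_ `^ _); apply: eq_bigr => j _; rewrite mxE normrN.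
Qed.

Lemma pnorm_sum (X : seq 'rV[R]_d) :
  pnorm p (\sum_(x <- X) x) <= \sum_(x <- X) pnorm p x.
Proof.
elim: X => [|x X IH]; first by rewrite !big_nil pnorm0.
by rewrite !big_cons; exact: ler_pnormD.
Qed.

Lemma pnorm_sumB_le_erp (A B : seq 'rV[R]_d) :
  pnorm p (\sum_(a <- A) a - \sum_(b <- B) b) <= erp p A B.
Proof.
elim: A B => [|a A IHA] B.
  by rewrite big_nil sub0r pnormN; exact: pnorm_sum.
elim: B => [|b B IHB]; first by rewrite big_nil subr0; exact: pnorm_sum.
rewrite [erp _ _ _]/= !le_min; apply/and3P; split.
- by rewrite big_cons -addrA; exact: ler_pnormD.
- rewrite [\sum_(y <- b :: B) y]big_cons opprD addrCA -[pnorm p b]pnormN.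
  exact: ler_pnormD.
- by rewrite !big_cons opprD addrACA; exact: ler_pnormD.
Qed.

End PNorm.

Lemma sum_rows (R : realType) (m d : nat) (M : 'M[R]_(m, d)) :
  \sum_(i < m) row i M = \sum_(r <- rows M) r.
Proof. by rewrite /rows big_map enumT. Qed.

Theorem lemma2 (R : realType) (p : R) (m n d : nat)
    (A : 'M[R]_(m, d)) (B : 'M[R]_(n, d)) :
  1 <= p ->
  pnorm p (\sum_(i < m) row i A - \sum_(j < n) row j B)
    <= erp p (rows A) (rows B).
Proof. by move=> p_ge1; rewrite !sum_rows; exact: pnorm_sumB_le_erp. Qed.
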